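(* Let $l\le n$ be positive integers and let $\mathbb F\subseteq\mathbb D_1^n$ satisfy $\mathrm{lh}(\mathbb F)\le l$. If $|\mathbb F|<2^l-1$, then there exists an index set $\mathbb F_0\subseteq\mathbb D_1^n\setminus\mathbb F$ of cardinality $2^l-1-|\mathbb F|$ such that $\mathrm{lh}(\mathbb F\cup\mathbb F_0)\le l$.
   Context: Dyadic intervals: $\Delta_k^{(j)}:=[\frac{j-1}{2^k},\frac{j}{2^k})$ for $k\ge0$. Dyadic tree $\mathbb D:=\{(k,j):k\ge1;\ j=1,\dots,2^{k-1}\}$; $\mathbb D_1^n:=\{(k,j):k=1,\dots,n;\ j=1,\dots,2^{k-1}\}$. Branches: $\mathbb B(t):=\{(k,j)\in\mathbb D:t\in\Delta_{k-1}^{(j)}\}$ for $t\in[0,1)$; local height of a finite $\mathbb F\subseteq\mathbb D$: $\mathrm{lh}(\mathbb F):=\max_{t\in[0,1)}|\mathbb F\cap\mathbb B(t)|$. *)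

From HB Require Import structures.
From mathcomp Require Import all_boot all_order all_algebra.
From mathcomp Require Import finmap boolp Rstruct.
From Stdlib Require Rdefinitions.
Notation R := Rdefinitions.R.
Set Implicit Arguments. Unset Strict Implicit. Unset Printing Implicit Defensive.
Import Order.TTheory GRing.Theory Num.Theory.
Local Open Scope fset_scope.

Definition in_dyadic (k j : nat) (t : R) : bool :=
  (((j.-1)%:R / (2 ^ k)%:R <= t) && (t < j%:R / (2 ^ k)%:R))%R.

Definition inD (x : nat * nat) : bool :=
  (1 <= x.1) && (1 <= x.2 <= 2 ^ x.1.-1).

Definition inD1n (n : nat) (x : nat * nat) : bool :=
  (1 <= x.1 <= n) && (1 <= x.2 <= 2 ^ x.1.-1).

Definition inB (t : R) (x : nat * nat) : bool :=
  inD x && in_dyadic x.1.-1 x.2 t.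

Definition branch_card (F : {fset nat * nat}) (t : R) : nat :=
  #|` [fset x in F | inB t x] |.

(* local height lh(F) = max_{t in [0,1)} |F ∩ B(t)|, realised as the
   largest value m <= |F| attained by some t in [0,1). *)
Definition lh (F : {fset nat * nat}) : nat :=
  \max_(m < (#|` F|).+1 |
        `[< exists t : R, ((0 <= t)%R /\ (t < 1)%R) /\ branch_card F t = m >]) m.

From HB Require Import structures.
From mathcomp Require Import all_boot all_order all_algebra.
From mathcomp Require Import finmap boolp Rstruct.
From mathcomp Require Import zify.
Import Order.TTheory GRing.Theory Num.Theory.
Local Open Scope fset_scope.
Local Open Scope nat_scope.
Set Implicit Arguments. Unset Strict Implicit.

(* Adding a node x outside F keeps lh <= l exactly when every branch through x
   meets F fewer than l times; call such an x free.  It suffices to find a free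
   node whenever |F| < 2^l - 1 and to add nodes one at a time.  Relative to a
   subtree T and a bound b (counting only F inside T), a subtree without free
   nodes contains at least 2^b - 1 nodes of F, by induction on its height: if the
   root of T is in F, neither child subtree has a free node for b - 1; otherwise
   some branch meets F at least b times strictly below the root, so a child
   subtree is tall enough to have no free node for b. *)

Lemma ler_natdiv (K : numFieldType) (t : K) a p q : 0 < p -> 0 < q ->
  (a%:R / p%:R <= t)%R = ((a * q)%:R <= t * (p * q)%:R)%R.
Proof. by move=> p0 q0; rewrite ler_pdivrMr ?ltr0n // !natrM mulrA ler_pM2r ?ltr0n. Qed.

Lemma ltr_natdiv (K : numFieldType) (t : K) a p q : 0 < p -> 0 < q ->
  (t < a%:R / p%:R)%R = (t * (p * q)%:R < (a * q)%:R)%R.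
Proof. by move=> p0 q0; rewrite ltr_pdivlMr ?ltr0n // !natrM mulrA ltr_pM2r ?ltr0n. Qed.

Section DyadicTree.

Variable n : nat.
Implicit Types (u v x y : nat * nat) (F : {fset nat * nat}) (m : nat).

(* Node (k, j) of D_1^n owns the leaves m (level-n positions) in
   [(j-1) 2^(n-k), j 2^(n-k)); leaf m stands for t in [m/2^(n-1), (m+1)/2^(n-1)),
   so the branch B(t) is the path from the root to the leaf [leaf_of t]. *)
Definition leaf_lo y := y.2.-1 * 2 ^ (n - y.1).
Definition leaf_hi y := y.2 * 2 ^ (n - y.1).
Definition on_path m y := leaf_lo y <= m < leaf_hi y.
Definition in_subtree v y :=
  [&& v.1 <= y.1, leaf_lo v <= leaf_lo y & leaf_hi y <= leaf_hi v].
Definition child v (b : bool) := (v.1.+1, v.2.*2 - ~~ b).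
Definition child_toward v m := child v (leaf_hi (child v false) <= m).

Definition path_card F m := #|` [fset y in F | on_path m y] |.
Definition subpath_card F v m := #|` [fset y in F | in_subtree v y && on_path m y] |.
Definition subtree_card F v := #|` [fset y in F | in_subtree v y] |.

Lemma leaf_hiE y : inD1n n y -> leaf_hi y = leaf_lo y + 2 ^ (n - y.1).
Proof.
case: y => k j /andP[_ /andP[/= j1 _]].
by rewrite /leaf_lo /leaf_hi /= -{1}(prednK j1) mulSn addnC.
Qed.

Lemma leaf_lo_lt_hi y : inD1n n y -> leaf_lo y < leaf_hi y.
Proof. by move=> hy; rewrite leaf_hiE // -addn1 leq_add2l expn_gt0. Qed.

Lemma in_subtree_refl v : in_subtree v v.
Proof. by rewrite /in_subtree !leqnn. Qed.

Lemma in_subtree_trans u v w : in_subtree u v -> in_subtree v w -> in_subtree u w.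
Proof.
move=> /and3P[h1 h2 h3] /and3P[h4 h5 h6].
by rewrite /in_subtree (leq_trans h1 h4) (leq_trans h2 h5) (leq_trans h6 h3).
Qed.

Lemma on_path_in_subtree m v y : in_subtree v y -> on_path m y -> on_path m v.
Proof.
move=> /and3P[_ h1 h2] /andP[h3 h4].
by rewrite /on_path (leq_trans h1 h3) (leq_trans h4 h2).
Qed.

Lemma in_subtree_same_level v y : inD1n n v -> inD1n n y -> y.1 = v.1 ->
  in_subtree v y -> y = v.
Proof.
case: v => k j; case: y => k' j' /andP[_ /andP[/= hj _]] /andP[_ /andP[/= hj' _]] /= ek.
rewrite /in_subtree /leaf_lo /leaf_hi /= ek !leq_pmul2r ?expn_gt0 // => /and3P[_ h1 h2].
congr pair; lia.
Qed.

Lemma child_inD1n v b : inD1n n v -> v.1 < n -> inD1n n (child v b).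
Proof.
case: v => k j /andP[/andP[/= k1 _] /andP[/= j1 jk]] /= kn.
have e : 2 ^ k = 2 ^ k.-1 * 2 by rewrite -expnSr; congr (_ ^ _); lia.
rewrite /inD1n /= e; case: b => /=; lia.
Qed.

Lemma expn2_subS k : k < n -> 2 ^ (n - k) = 2 * 2 ^ (n - k.+1).
Proof. by move=> kn; rewrite -expnS subnSK. Qed.

Lemma leaf_lo_child v b : inD1n n v -> v.1 < n ->
  leaf_lo (child v b) = leaf_lo v + b * 2 ^ (n - v.1.+1).
Proof.
move=> /andP[_ /andP[j1 _]] /expn2_subS; case: v j1 => k [|j] //= _ e.
by rewrite /leaf_lo /= e; case: b => /=; nia.
Qed.

Lemma in_subtree_child v b : inD1n n v -> v.1 < n -> in_subtree v (child v b).
Proof.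
move=> hv kn; rewrite /in_subtree !leaf_hiE ?child_inD1n // leaf_lo_child //=.
by rewrite (expn2_subS kn); case: b => /=; lia.
Qed.

Lemma leaf_hi_le_aligned y c : inD1n n y ->
  leaf_lo y < c * 2 ^ (n - y.1) -> leaf_hi y <= c * 2 ^ (n - y.1).
Proof.
case: y => k j /andP[_ /andP[/= j1 _]].
by rewrite /leaf_lo /leaf_hi /= ltn_pmul2r ?leq_pmul2r ?expn_gt0 // prednK.
Qed.

Lemma leaf_hi_child_false v : leaf_hi (child v false) = leaf_lo (child v true).
Proof. by rewrite /leaf_lo /leaf_hi /= subn0 subn1. Qed.

Lemma in_subtree_some_child v y : inD1n n v -> inD1n n y -> v.1 < y.1 ->
  in_subtree v y -> exists b, in_subtree (child v b) y.
Proof.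
move=> hv hy lt_vy /and3P[_ lo_le hi_le].
have kn : v.1 < n by move: hy => /andP[/andP[_ ?] _]; apply: leq_trans lt_vy _.
exists (leaf_hi (child v false) <= leaf_lo y).
have child_hi b : leaf_hi (child v b) = leaf_lo v + b.+1 * 2 ^ (n - v.1.+1).
  by rewrite leaf_hiE ?child_inD1n // leaf_lo_child //= -addnA -mulSnr.
have child_lvl b : (child v b).1 <= y.1 := lt_vy.
rewrite /in_subtree child_lvl.
case: (leqP (leaf_hi (child v false)) (leaf_lo y)) => [mid_le | mid_gt].
  rewrite -leaf_hi_child_false mid_le child_hi.
  by move: hi_le; rewrite [leaf_hi v]leaf_hiE // expn2_subS.
rewrite leaf_lo_child // addn0 lo_le.
have e : leaf_hi (child v false) = (v.2.*2 - 1) * 2 ^ (y.1 - v.1.+1) * 2 ^ (n - y.1).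
  rewrite /leaf_hi /= -mulnA -expnD; congr (_ * 2 ^ _).
  by move: hy => /andP[/andP[_ ?] _]; lia.
by move: mid_gt; rewrite e => /(leaf_hi_le_aligned hy).
Qed.

Lemma child_toward_on_path v b m : on_path m (child v b) -> child_toward v m = child v b.
Proof.
rewrite /child_toward => /andP[lo_le hi_gt]; congr child.
by case: b lo_le hi_gt => [|_ hi_gt]; [rewrite leaf_hi_child_false | rewrite leqNgt hi_gt].
Qed.

Definition tree_root : nat * nat := (1, 1).

Lemma tree_root_inD1n : 0 < n -> inD1n n tree_root.
Proof. by rewrite /inD1n /= => ->. Qed.

Lemma in_subtree_root y : inD1n n y -> in_subtree tree_root y.
Proof.
case: y => k j /andP[/andP[/= k1 kn] /andP[_ /= jk]].
rewrite /in_subtree /leaf_lo /leaf_hi /= k1 mul1n /=.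
have -> : 2 ^ (n - 1) = 2 ^ k.-1 * 2 ^ (n - k) by rewrite -expnD; congr (_ ^ _); lia.
by rewrite leq_pmul2r ?expn_gt0.
Qed.

Section Counting.

Variable F : {fset nat * nat}.
Hypothesis F_sub : forall y, y \in F -> inD1n n y.

Lemma in_subtree_deeper v y : inD1n n v -> y \in F -> in_subtree v y -> y != v ->
  v.1 < y.1.
Proof.
move=> hv yF sub; apply: contraNT; rewrite -leqNgt => le_yv.
have lvl : y.1 = v.1 by apply/eqP; rewrite eqn_leq le_yv; case/and3P: sub.
by rewrite (in_subtree_same_level hv (F_sub yF) lvl sub).
Qed.

Lemma subpath_card_child v m : inD1n n v -> v.1 < n ->
  subpath_card F v m <= (v \in F) + subpath_card F (child_toward v m) m.
Proof.
move=> hv kn; rewrite /subpath_card (cardfsD1 v); apply: leq_add.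
  by rewrite !inE; case: (v \in F) => //=; apply: leq_b1.
apply: fsubset_leq_card; apply/fsubsetP => y.
rewrite !inE => /andP[ne /andP[yF /andP[sub ym]]]; rewrite yF ym andbT /=.
have [b sub_c] := in_subtree_some_child hv (F_sub yF) (in_subtree_deeper hv yF sub ne) sub.
by rewrite (child_toward_on_path (on_path_in_subtree sub_c ym)).
Qed.

Lemma subpath_card_bottom v m : inD1n n v -> v.1 = n ->
  subpath_card F v m <= (v \in F).
Proof.
move=> hv vn; rewrite /subpath_card (cardfsD1 v).
have -> : [fset y in F | in_subtree v y && on_path m y] `\ v = fset0.
  apply/fsetP => y; rewrite !inE; apply/negP => /andP[ne /andP[yF /andP[sub _]]].
  have := in_subtree_deeper hv yF sub ne.
  by move: (F_sub yF) => /andP[/andP[_ yn] _]; rewrite vn ltnNge yn.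
by rewrite cardfs0 addn0 !inE; case: (v \in F) => //=; apply: leq_b1.
Qed.

Lemma subpath_card_le v m : inD1n n v -> subpath_card F v m <= (v \in F) + (n - v.1).
Proof.
move def_d: (n - v.1) => d; elim: d v def_d => [|d IH] v e hv.
  rewrite addn0 subpath_card_bottom //; case/andP: hv => /andP[_ vn] _.
  by apply/eqP; rewrite eqn_leq vn -subn_eq0 e.
have kn : v.1 < n by rewrite -subn_gt0 e.
apply: leq_trans (subpath_card_child m hv kn) _; rewrite leq_add2l.
have /IH /(_ (child_inD1n _ hv kn)) : n - (child_toward v m).1 = d by rewrite subnS e.
by case: (_ \in F) => //= /leqW.
Qed.

Lemma subtree_card_mono v c : in_subtree v c -> subtree_card F c <= subtree_card F v.
Proof.
move=> vc; apply: fsubset_leq_card; apply/fsubsetP => y; rewrite !inE.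
by case/andP=> -> /(in_subtree_trans vc).
Qed.

Lemma subtree_card_children v : inD1n n v -> v.1 < n ->
  (v \in F) + (subtree_card F (child v false) + subtree_card F (child v true))
    <= subtree_card F v.
Proof.
move=> hv kn; rewrite /subtree_card [X in _ <= X](cardfsD1 v).
have -> : v \in [fset y in F | in_subtree v y] = (v \in F).
  by rewrite !inE in_subtree_refl andbT.
rewrite leq_add2l -cardfsUI.
have -> : [fset y in F | in_subtree (child v false) y] `&`
          [fset y in F | in_subtree (child v true) y] = fset0.
  apply/fsetP => y; rewrite !inE; apply/negP.
  case/andP=> /andP[yF /and3P[_ _ hi_y]] /andP[_ /and3P[_ lo_y _]].
  have := leaf_lo_lt_hi (F_sub yF); rewrite ltnNge.
  by rewrite (leq_trans hi_y) // leaf_hi_child_false.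
rewrite cardfs0 addn0; apply: fsubset_leq_card; apply/fsubsetP => y.
have below_child b : in_subtree (child v b) y -> (y != v) && in_subtree v y.
  move=> sub; rewrite (in_subtree_trans (in_subtree_child b hv kn) sub) andbT.
  by apply: contraTneq sub => ->; rewrite /in_subtree ltnn.
by rewrite !inE => /orP[] /andP[-> /below_child].
Qed.

Definition free_node v b x := [/\ inD1n n x, in_subtree v x, x \notin F &
  forall m, on_path m x -> subpath_card F v m < b].

Lemma free_node_child v c b x : inD1n n v -> v.1 < n ->
  free_node (child v c) b x -> free_node v ((v \in F) + b) x.
Proof.
move=> hv kn [hx sub xF bnd]; split => //.
  exact: in_subtree_trans (in_subtree_child c hv kn) sub.
move=> m xm; have cm := on_path_in_subtree sub xm.
apply: leq_ltn_trans (subpath_card_child m hv kn) _.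
by rewrite (child_toward_on_path cm) ltn_add2l bnd.
Qed.

Lemma full_subtree_or_free_node v b : inD1n n v -> b <= (n - v.1).+1 ->
  2 ^ b - 1 <= subtree_card F v \/ exists x, free_node v b x.
Proof.
have [d] := ubnP (n - v.1); elim: d v b => // d IH v b lt_d hv hb.
case: b hb => [|b] hb; first by left; rewrite expn0 subnn.
have IHc c b' : v.1 < n -> b' <= n - v.1 ->
    2 ^ b' - 1 <= subtree_card F (child v c) \/ exists x, free_node (child v c) b' x.
  by move=> kn hb'; apply: IH; rewrite ?child_inD1n //= subnS ?prednK ?subn_gt0 //; lia.
case vF: (v \in F).
  have [kn | vn] := ltnP v.1 n; last first.
    have -> : b = 0 by lia.
    by left; rewrite /subtree_card (cardfsD1 v) !inE vF in_subtree_refl.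
  have lift c x : free_node (child v c) b x -> exists x, free_node v b.+1 x.
    by move=> /(free_node_child hv kn); rewrite vF => fx; exists x.
  have [full_f | [x /lift]] := IHc false b kn hb; last by right.
  have [full_t | [x /lift]] := IHc true b kn hb; last by right.
  left; apply: leq_trans (subtree_card_children hv kn); rewrite vF expnS add1n.
  have : 0 < 2 ^ b by rewrite expn_gt0.
  lia.
have [all_lt | ] := pselect (forall m, on_path m v -> subpath_card F v m < b.+1).
  by right; exists v; split; rewrite ?in_subtree_refl ?vF.
move=> /existsNP[m /not_implyP[vm /negP]]; rewrite -leqNgt => big.
(* The branch m meets F at least b + 1 times strictly below v, so the subtrees
   of the children of v have height at least b + 1. *)
have := leq_trans big (subpath_card_le m hv); rewrite vF add0n => hb'.
have kn : v.1 < n by rewrite -subn_gt0 (leq_trans _ hb').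
have [full | [x /(free_node_child hv kn)]] := IHc false b.+1 kn hb'.
  by left; apply: leq_trans full (subtree_card_mono (in_subtree_child _ hv kn)).
by rewrite vF => fx; right; exists x.
Qed.

Lemma subpath_card_root m : subpath_card F tree_root m = path_card F m.
Proof.
rewrite /subpath_card /path_card; congr #|` _|; apply/fsetP => y; rewrite !inE.
by case yF: (y \in F); rewrite //= in_subtree_root ?F_sub.
Qed.

Lemma subtree_card_root : subtree_card F tree_root = #|` F|.
Proof.
rewrite /subtree_card; congr #|` _|; apply/fsetP => y; rewrite !inE.
by case yF: (y \in F); rewrite //= in_subtree_root ?F_sub.
Qed.

Lemma exists_free_node l : 0 < l <= n -> #|` F| < 2 ^ l - 1 ->
  exists x, [/\ inD1n n x, x \notin F & forall m, on_path m x -> path_card F m < l].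
Proof.
case/andP=> l0 ln small.
have n0 : 0 < n by apply: leq_trans ln.
have ln' : l <= (n - tree_root.1).+1 by rewrite /= subn1 prednK.
have [full | [x [hx _ xF bnd]]] := full_subtree_or_free_node (tree_root_inD1n n0) ln'.
  by move: full; rewrite subtree_card_root leqNgt small.
by exists x; split=> // m /bnd; rewrite subpath_card_root.
Qed.

End Counting.

Lemma path_card_fsetU1 F x m : path_card (x |` F) m <= on_path m x + path_card F m.
Proof.
rewrite /path_card (cardfsD1 x); apply: leq_add; first by rewrite !inE eqxx.
apply: fsubset_leq_card; apply/fsubsetP => y; rewrite !inE.
by case/and3P=> /negbTE-> /= -> ->.
Qed.

Lemma extend_bounded_paths l r F : 0 < l <= n ->
  (forall y, y \in F -> inD1n n y) -> (forall m, path_card F m <= l) ->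
  #|` F| + r <= 2 ^ l - 1 ->
  exists F0 : {fset nat * nat},
    (forall x, x \in F0 -> inD1n n x && (x \notin F)) /\ #|` F0| = r /\
    (forall m, path_card (F `|` F0) m <= l).
Proof.
move=> hl; elim: r F => [|r IH] F F_sub bnd small.
  by exists fset0; rewrite cardfs0 fsetU0; split=> // x; rewrite in_fset0.
have lt_F : #|` F| < 2 ^ l - 1 by rewrite -addn1 (leq_trans _ small) // leq_add2l.
have [x [hx xF x_free]] := exists_free_node F_sub hl lt_F.
have F_sub' y : y \in x |` F -> inD1n n y by rewrite in_fset1U => /orP[/eqP-> | /F_sub].
have bnd' m : path_card (x |` F) m <= l.
  apply: leq_trans (path_card_fsetU1 F x m) _.
  by case xm: (on_path m x); [apply: x_free | apply: bnd].
have small' : #|` x |` F| + r <= 2 ^ l - 1 by rewrite cardfsU1 xF add1n addSnnS.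
have [F0 [F0_sub [<- bnd0]]] := IH _ F_sub' bnd' small'.
have xF0 : x \notin F0 by apply/negP => /F0_sub; rewrite in_fset1U eqxx andbF.
exists (x |` F0); split; last split.
- move=> y; rewrite in_fset1U => /orP[/eqP-> | /F0_sub]; first by rewrite hx xF.
  by rewrite in_fset1U negb_or => /andP[-> /andP[_ ->]].
- by rewrite cardfsU1 xF0.
- by move=> m; rewrite fsetUA (fsetUC F); apply: bnd0.
Qed.

Definition leaf_of (t : R) : nat := Num.truncn (t * (2 ^ (n - 1))%:R)%R.

Lemma in_dyadic_on_path (t : R) y : (0 <= t)%R -> inD1n n y ->
  in_dyadic y.1.-1 y.2 t = on_path (leaf_of t) y.
Proof.
case: y => k j t0 /andP[/andP[/= k1 kn] _].
have eN : 2 ^ (n - 1) = 2 ^ k.-1 * 2 ^ (n - k) by rewrite -expnD; congr (_ ^ _); lia.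
rewrite /in_dyadic /on_path /leaf_lo /leaf_hi /leaf_of /= eN.
have p0 := expn_gt0 2 k.-1; have q0 := expn_gt0 2 (n - k).
have tN : (0 <= t * (2 ^ k.-1 * 2 ^ (n - k))%:R)%R by rewrite mulr_ge0.
by rewrite (ler_natdiv _ _ p0 q0) (ltr_natdiv _ _ p0 q0) -truncn_ge_nat // -truncn_lt_nat.
Qed.

Lemma branch_card_path_card G (t : R) : (forall y, y \in G -> inD1n n y) ->
  (0 <= t)%R -> branch_card G t = path_card G (leaf_of t).
Proof.
move=> G_sub t0; rewrite /branch_card /path_card; congr #|` _|.
apply/fsetP => y; rewrite !inE /inB; case yG: (y \in G) => //=.
have hy := G_sub y yG; rewrite in_dyadic_on_path //.
by case/andP: hy => /andP[k1 _] j_ok; rewrite /inD k1 j_ok.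
Qed.

Lemma path_card_beyond G m : (forall y, y \in G -> inD1n n y) ->
  2 ^ (n - 1) <= m -> path_card G m = 0.
Proof.
move=> G_sub big; apply/eqP; rewrite cardfs_eq0; apply/eqP/fsetP => y.
rewrite !inE; apply/negP => /andP[/G_sub/in_subtree_root sub ym].
have /andP[_] := on_path_in_subtree sub ym.
by rewrite /leaf_hi mul1n ltnNge big.
Qed.

Lemma leaf_ofK m : m < 2 ^ (n - 1) ->
  let t : R := (m%:R / (2 ^ (n - 1))%:R)%R in [/\ (0 <= t)%R, (t < 1)%R & leaf_of t = m].
Proof.
move=> lt_m t; have N0 : (0 < (2 ^ (n - 1))%:R :> R)%R by rewrite ltr0n expn_gt0.
split; first by rewrite divr_ge0 // ltW.
  by rewrite ltr_pdivrMr // mul1r ltr_nat.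
by rewrite /leaf_of divfK ?gt_eqF // natrK.
Qed.

Lemma branch_card_le_lh G (t : R) : (0 <= t)%R -> (t < 1)%R -> branch_card G t <= lh G.
Proof.
move=> t0 t1; have : branch_card G t < (#|` G|).+1.
  by rewrite ltnS; apply: fsubset_leq_card; apply/fsubsetP => y; rewrite !inE => /andP[].
move=> lt_G; apply: (@leq_bigmax_cond _ _ _ (Ordinal lt_G)).
by apply/asboolP; exists t.
Qed.

Lemma lh_leP G l : (forall y, y \in G -> inD1n n y) ->
  reflect (forall m, path_card G m <= l) (lh G <= l).
Proof.
move=> G_sub; apply: (iffP idP) => [lh_l m | bnd].
  have [lt_m | ge_m] := ltnP m (2 ^ (n - 1)); last by rewrite path_card_beyond.
  have [t0 t1 <-] := leaf_ofK lt_m.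
  by rewrite -branch_card_path_card // (leq_trans (branch_card_le_lh _ t0 t1)).
apply/bigmax_leqP => i /asboolP[t [[t0 _] <-]].
by rewrite branch_card_path_card.
Qed.

End DyadicTree.

Theorem corollary4p2 (l n : nat) (F : {fset nat * nat}) :
  (0 < l)%N -> (l <= n)%N ->
  (forall x, x \in F -> inD1n n x) ->
  (lh F <= l)%N ->
  (#|` F| < 2 ^ l - 1)%N ->
  exists F0 : {fset nat * nat},
    (forall x, x \in F0 -> inD1n n x && (x \notin F)) /\
    #|` F0| = (2 ^ l - 1 - #|` F|)%N /\
    (lh (F `|` F0) <= l)%N.
Proof.
move=> l0 ln F_sub /(lh_leP _ F_sub) F_bnd small.
have hl : 0 < l <= n by rewrite l0.
have fill : #|` F| + (2 ^ l - 1 - #|` F|) <= 2 ^ l - 1 by rewrite subnKC // ltnW.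
have [F0 [F0_sub [card_F0 bnd]]] := extend_bounded_paths hl F_sub F_bnd fill.
exists F0; split=> //; split=> //; apply/(lh_leP _ _)/bnd => y.
by rewrite in_fsetU => /orP[/F_sub | /F0_sub /andP[]].
Qed.
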